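(* For every integer $k\ge1$, \[ \sum_{n=1}^\infty\frac{P_k(H_n,H_n^{(2)},\dots,H_n^{(k)})}{(n+2)^2}=\sum_{j=2}^{k+2}\zeta(j)-(k+1). \]
   Context: $H_n^{(r)}=\sum_{t=1}^n t^{-r}$, $H_n=H_n^{(1)}$. For $n\ge1$, $P_n(y_1,\dots,y_n)=\sum_{m_1+2m_2+\cdots=n}\frac{(-1)^{m_2+m_4+\cdots}}{m_1!m_2!\cdots}\prod_{i\ge1}(y_i/i)^{m_i}$ (sum over tuples of nonnegative integers), so that $P_k(H_n,\dots,H_n^{(k)})=\sum_{1\le n_1<\cdots<n_k\le n}\frac{1}{n_1\cdots n_k}$. $\zeta$ is the Riemann zeta function. *)

From Stdlib Require Import Reals Lra List Arith ClassicalEpsilon.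
Import ListNotations.
Open Scope R_scope.

Fixpoint Hr (r n : nat) : R :=
  match n with
  | O => 0
  | S m => Hr r m + / (INR (S m)) ^ r
  end.

Fixpoint tuples (len b : nat) : list (list nat) :=
  match len with
  | O => [nil]
  | S l => flat_map (fun t => map (fun a => a :: t) (seq 0 (S b))) (tuples l b)
  end.

Fixpoint weight (i : nat) (m : list nat) : nat :=
  match m with
  | nil => O
  | a :: t => (i * a + weight (S i) t)%nat
  end.

Fixpoint pterm (i : nat) (y : nat -> R) (m : list nat) : R :=
  match m with
  | nil => 1
  | a :: t =>
      (if Nat.even i then (-1) ^ a else 1) / INR (fact a)
      * (y i / INR i) ^ a * pterm (S i) y t
  end.

(* P_k(y_1,...,y_k): sum over (m_1,...,m_k) with m_1 + 2 m_2 + ... + k m_k = k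
   (necessarily each m_i <= k, and m_i = 0 for i > k).  y i stands for y_i. *)
Definition P (k : nat) (y : nat -> R) : R :=
  fold_right Rplus 0
    (map (pterm 1 y) (filter (fun m => Nat.eqb (weight 1 m) k) (tuples k k))).

Definition zeta (s : nat) : R :=
  epsilon (inhabits 0)
    (fun l => infinite_sum (fun n => / (INR (S n)) ^ s) l).

From Stdlib Require Import Reals Lra Lia Arith List ClassicalEpsilon.
Open Scope R_scope.

(* By Newton's identities, P_k(H_n, ..., H_n^(k)) is the elementary symmetric function
   e_k(n) of 1, 1/2, ..., 1/n.  Since e_(k+1)(n+1) = e_(k+1)(n) + e_k(n)/(n+1), the series
   a_k = sum_n e_k(n)/(n+2)^2 satisfies
     a_(k+1) = a_k + sum_n e_(k+1)(n)/(n+1)^2 - sum_n e_k(n)/((n+1)(n+2)),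
   and the last two series equal zeta(k+3) and 1.  Both are evaluated by exchanging sums
   of nonnegative terms in e_(r+1)(n) = sum_(j<n) e_r(j)/(j+1): the second telescopes, and
   the first reduces to the discrete Beta integral sum_n e_r(n) m! n!/(m+n+1)! = 1/m^(r+1)
   summed against 1/m over m >= 1. *)

(** * Series *)

Lemma INR_S_pos n : 0 < INR (S n).
Proof. apply lt_0_INR; lia. Qed.

Lemma Rdiv_le_0_compat a b : 0 <= a -> 0 < b -> 0 <= a / b.
Proof. intros Ha Hb; apply Rmult_le_pos; [exact Ha | left; apply Rinv_0_lt_compat, Hb]. Qed.

Lemma Un_cv_const c : Un_cv (fun _ => c) c.
Proof. intros eps Heps; exists O; intros; unfold Rdist; rewrite Rminus_diag, Rabs_R0; lra. Qed.

Lemma Un_cv_shift u l : Un_cv u l -> Un_cv (fun n => u (S n)) l.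
Proof. intros Hu eps Heps; destruct (Hu eps Heps) as [N HN]; exists N; intros n Hn; apply HN; lia. Qed.

Lemma Un_cv_eventually_ext u v l N :
  (forall n, (N <= n)%nat -> u n = v n) -> Un_cv u l -> Un_cv v l.
Proof.
  intros Huv Hu eps Heps; destruct (Hu eps Heps) as [M HM]; exists (Nat.max N M); intros n Hn.
  rewrite <- Huv by lia; apply HM; lia.
Qed.

Lemma Un_cv_sub_shift c u : Un_cv u 0 -> Un_cv (fun n => c - u (S n)) c.
Proof.
  intros Hu; pose proof (CV_minus _ _ _ _ (Un_cv_const c) (Un_cv_shift _ _ Hu)) as H.
  rewrite Rminus_0_r in H; exact H.
Qed.

Lemma Un_cv_0_le_inv u : (forall n, 0 <= u n <= / INR (S n)) -> Un_cv u 0.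
Proof.
  intros Hu eps Heps; destruct (INR_archimed eps 1 Heps) as [N HN]; exists N; intros n Hn.
  unfold Rdist; rewrite Rminus_0_r; destruct (Hu n) as [Hu0 Hu1]; rewrite Rabs_right by lra.
  eapply Rle_lt_trans; [exact Hu1|]; apply le_INR in Hn; rewrite S_INR.
  apply (Rmult_lt_reg_r (INR n + 1)); [pose proof (pos_INR n); lra|].
  rewrite Rinv_l by (pose proof (pos_INR n); lra); nra.
Qed.

Lemma Un_cv_inv_S : Un_cv (fun n => / INR (S n)) 0.
Proof. apply Un_cv_0_le_inv; intros n; split; [left; apply Rinv_0_lt_compat, INR_S_pos | lra]. Qed.

Lemma infinite_sum_ext f g l : (forall n, f n = g n) -> infinite_sum f l -> infinite_sum g l.
Proof. intros Hfg; apply (Un_cv_eventually_ext _ _ _ 0); intros n _; apply sum_eq; auto. Qed.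

Lemma infinite_sum_plus f g l1 l2 : infinite_sum f l1 -> infinite_sum g l2 ->
  infinite_sum (fun n => f n + g n) (l1 + l2).
Proof.
  intros Hf Hg; apply (Un_cv_eventually_ext _ _ _ 0 (fun n _ => eq_sym (sum_plus f g n))).
  exact (CV_plus _ _ _ _ Hf Hg).
Qed.

Lemma infinite_sum_minus f g l1 l2 : infinite_sum f l1 -> infinite_sum g l2 ->
  infinite_sum (fun n => f n - g n) (l1 - l2).
Proof.
  intros Hf Hg; apply (Un_cv_eventually_ext _ _ _ 0 (fun n _ => eq_sym (minus_sum f g n))).
  exact (CV_minus _ _ _ _ Hf Hg).
Qed.

Lemma infinite_sum_scal c f l : infinite_sum f l -> infinite_sum (fun n => c * f n) (c * l).
Proof.
  intros Hf; apply (Un_cv_eventually_ext (fun n => c * sum_f_R0 f n) _ _ 0).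
  - intros n _; rewrite scal_sum; apply sum_eq; intros; ring.
  - exact (CV_mult _ _ _ _ (Un_cv_const c) Hf).
Qed.

Lemma infinite_sum_shift f l : infinite_sum f l -> infinite_sum (fun n => f (S n)) (l - f O).
Proof.
  intros Hf; apply (Un_cv_eventually_ext (fun n => sum_f_R0 f (S n) - f O) _ _ 0).
  - intros n _; rewrite (decomp_sum f (S n)) by lia; simpl pred; ring.
  - exact (CV_minus _ _ _ _ (Un_cv_shift _ _ Hf) (Un_cv_const _)).
Qed.

Lemma infinite_sum_finite f N : (forall n, (N < n)%nat -> f n = 0) ->
  infinite_sum f (sum_f_R0 f N).
Proof.
  intros Hf; apply (Un_cv_eventually_ext (fun _ => sum_f_R0 f N) _ _ N); [|apply Un_cv_const].
  intros n Hn; induction Hn as [|n Hn IH]; [reflexivity|]; rewrite tech5, Hf, IH by lia; ring.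
Qed.

Lemma infinite_sum_telescope g : Un_cv g 0 -> infinite_sum (fun n => g n - g (S n)) (g O).
Proof.
  intros Hg; apply (Un_cv_eventually_ext (fun n => g O - g (S n)) _ _ 0);
    [|exact (Un_cv_sub_shift (g O) g Hg)].
  intros n _; induction n as [|n IH]; simpl; [ring|]; rewrite <- IH; ring.
Qed.

Lemma infinite_sum_telescope_from g j : Un_cv g 0 ->
  infinite_sum (fun n => if (j <? n)%nat then g n - g (S n) else 0) (g (S j)).
Proof.
  intros Hg; apply (Un_cv_eventually_ext (fun n => g (S j) - g (S n)) _ _ j);
    [|exact (Un_cv_sub_shift (g (S j)) g Hg)].
  intros n Hn; induction Hn as [|n Hn IH].
  - rewrite sum_eq_R0; [ring|]; intros i Hi; destruct (Nat.ltb_spec j i); [lia|reflexivity].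
  - rewrite tech5, <- IH; destruct (Nat.ltb_spec j (S n)); [ring|lia].
Qed.

Lemma sum_f_R0_exchange (a : nat -> nat -> R) M N :
  sum_f_R0 (fun m => sum_f_R0 (a m) N) M = sum_f_R0 (fun n => sum_f_R0 (fun m => a m n) M) N.
Proof.
  induction M as [|M IH]; simpl; [reflexivity|]; rewrite IH, <- sum_plus; apply sum_eq; reflexivity.
Qed.

Lemma sum_f_R0_eq_first (f : nat -> R) N : (forall n, (1 <= n)%nat -> f n = 0) -> sum_f_R0 f N = f O.
Proof. intros Hf; induction N as [|N IH]; [reflexivity|]; rewrite tech5, IH, (Hf (S N)) by lia; ring. Qed.

Lemma sum_f_R0_indicator (f : nat -> R) i N :
  sum_f_R0 (fun j => if (j =? i)%nat then f j else 0) N = if (i <=? N)%nat then f i else 0.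
Proof.
  induction N as [|N IH]; [destruct i; reflexivity|]; rewrite tech5, IH.
  destruct (Nat.eqb_spec (S N) i), (Nat.leb_spec i N), (Nat.leb_spec i (S N)); subst; lia || ring.
Qed.

Lemma sum_f_R0_guard_le_split (f : nat -> R) i N :
  sum_f_R0 (fun j => if (i <=? j)%nat then f j else 0) N =
  (if (i <=? N)%nat then f i else 0) + sum_f_R0 (fun j => if (S i <=? j)%nat then f j else 0) N.
Proof.
  rewrite <- sum_f_R0_indicator, <- sum_plus; apply sum_eq; intros j _.
  destruct (Nat.leb_spec i j), (Nat.eqb_spec j i), (Nat.leb_spec (S i) j); lia || ring.
Qed.

Lemma sum_f_R0_guard_le_extend (f : nat -> R) n N : (n <= N)%nat ->
  sum_f_R0 f n = sum_f_R0 (fun j => if (j <=? n)%nat then f j else 0) N.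
Proof.
  intros HnN; induction HnN as [|N HnN IH].
  - apply sum_eq; intros j Hj; destruct (Nat.leb_spec j n); [reflexivity | lia].
  - rewrite IH, tech5; destruct (Nat.leb_spec (S N) n); [lia | ring].
Qed.

Lemma sum_f_R0_telescope_until (g : nat -> R) k :
  sum_f_R0 (fun j => if (j <? k)%nat then g j - g (S j) else g j) k = g O.
Proof.
  revert g; induction k as [|k IH]; intros g; [reflexivity|].
  rewrite decomp_sum by lia; simpl pred.
  rewrite (sum_eq _ (fun j => if (j <? k)%nat then g (S j) - g (S (S j)) else g (S j))), IH
    by reflexivity; simpl; ring.
Qed.

Lemma Un_cv_sum_f_R0 (u : nat -> nat -> R) (l : nat -> R) N :
  (forall n, Un_cv (fun M => u M n) (l n)) -> Un_cv (fun M => sum_f_R0 (u M) N) (sum_f_R0 l N).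
Proof. intros Hu; induction N; simpl; [apply Hu | apply CV_plus; auto]. Qed.

(* Tonelli for double series of nonnegative terms: the partial sums of the column
   sums are squeezed between [s - eps] and [s]. *)
Lemma infinite_sum_exchange (a : nat -> nat -> R) (row col : nat -> R) (s : R) :
  (forall m n, 0 <= a m n) -> (forall m, infinite_sum (a m) (row m)) ->
  (forall n, infinite_sum (fun m => a m n) (col n)) -> infinite_sum row s -> infinite_sum col s.
Proof.
  intros Ha Hrow Hcol Hs.
  assert (Hrow0 : forall m, 0 <= row m).
  { intros m; apply Rle_trans with (sum_f_R0 (a m) O);
    [apply Ha | apply sum_incr; [apply Hrow | apply Ha]]. }
  assert (Hcol0 : forall n, 0 <= col n).
  { intros n; apply Rle_trans with (sum_f_R0 (fun m => a m n) O);
    [apply Ha | apply sum_incr; [apply Hcol | intros; apply Ha]]. }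
  assert (Hup : forall N, sum_f_R0 col N <= s).
  { intros N; refine (Rle_cv_lim _
      (Un_cv_sum_f_R0 (fun M n => sum_f_R0 (fun m => a m n) M) col N Hcol) (Un_cv_const s)).
    intros M; rewrite <- sum_f_R0_exchange.
    apply Rle_trans with (sum_f_R0 row M); [|apply sum_incr; [apply Hs | apply Hrow0]].
    apply sum_growing; intros m; apply sum_incr; [apply Hrow | apply Ha]. }
  assert (Hlow : forall eps, eps > 0 -> exists N, s - eps < sum_f_R0 col N).
  { intros eps Heps; destruct (Hs (eps / 2) ltac:(lra)) as [M HM].
    destruct (Un_cv_sum_f_R0 (fun N m => sum_f_R0 (a m) N) row M Hrow (eps / 2) ltac:(lra))
      as [N HN]; exists N.
    specialize (HM M (le_n _)); specialize (HN N (le_n _)); simpl in HN.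
    rewrite sum_f_R0_exchange in HN; unfold Rdist in HM, HN.
    assert (sum_f_R0 (fun n => sum_f_R0 (fun m => a m n) M) N <= sum_f_R0 col N)
      by (apply sum_growing; intros n; apply sum_incr; [apply Hcol | intros; apply Ha]).
    apply Rabs_def2 in HM; apply Rabs_def2 in HN; lra. }
  intros eps Heps; destruct (Hlow eps Heps) as [N HN]; exists N; intros n Hn; unfold Rdist.
  assert (sum_f_R0 col N <= sum_f_R0 col n).
  { induction Hn as [|n Hn IH]; [lra|]; rewrite tech5; specialize (Hcol0 (S n)); lra. }
  specialize (Hup n); apply Rabs_def1; lra.
Qed.

(** * Series weighted by elementary symmetric functions *)

(* [esym k n] is the k-th elementary symmetric function of 1, 1/2, ..., 1/n. *)
Fixpoint esym (k : nat) : nat -> R :=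
  match k with
  | O => fun _ => 1
  | S k' => fix esym_k n := match n with
                            | O => 0
                            | S n' => esym_k n' + esym k' n' / INR (S n')
                            end
  end.

Lemma esym_S_S k n : esym (S k) (S n) = esym (S k) n + esym k n / INR (S n).
Proof. reflexivity. Qed.

Lemma esym_ge0 k n : 0 <= esym k n.
Proof.
  revert n; induction k as [|k IHk]; intros n; [simpl; lra|].
  induction n as [|n IHn]; [simpl; lra|]; rewrite esym_S_S.
  pose proof (Rdiv_le_0_compat _ _ (IHk n) (INR_S_pos n)); lra.
Qed.

Lemma esym_S_sum_lt r i n : (i <= S n)%nat ->
  sum_f_R0 (fun j => if (j <? i)%nat then esym r j / INR (S j) else 0) n = esym (S r) i.
Proof.
  revert i; induction n as [|n IH]; intros i Hi.
  - destruct i as [|[|i]]; simpl; [ring | ring | lia].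
  - rewrite tech5; destruct (Nat.ltb_spec (S n) i) as [Hlt|Hge].
    + replace i with (S (S n)) by lia; rewrite esym_S_S, <- (IH (S n)) by lia.
      f_equal; apply sum_eq; intros j Hj.
      destruct (Nat.ltb_spec j (S (S n))), (Nat.ltb_spec j (S n)); lia || reflexivity.
    + rewrite IH by lia; ring.
Qed.

(* Summation by parts through [esym (S r) i = sum_(j < i) esym r j / (j + 1)]:
   the inner sums over [i > j] are the tails [T j] of the weights. *)
Lemma infinite_sum_esym_S_mul r (w T : nat -> R) (L : R) :
  (forall i, 0 <= w i) -> (forall j, infinite_sum (fun i => if (j <? i)%nat then w i else 0) (T j)) ->
  infinite_sum (fun j => esym r j / INR (S j) * T j) L ->
  infinite_sum (fun i => esym (S r) i * w i) L.
Proof.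
  intros Hw HT HL.
  apply (infinite_sum_exchange
    (fun j i => (if (j <? i)%nat then esym r j / INR (S j) else 0) * w i)
    (fun j => esym r j / INR (S j) * T j)); [| | |exact HL].
  - intros j i; destruct (j <? i)%nat; [|lra].
    apply Rmult_le_pos; [apply Rdiv_le_0_compat; [apply esym_ge0 | apply INR_S_pos] | apply Hw].
  - intros j; eapply infinite_sum_ext; [|exact (infinite_sum_scal _ _ _ (HT j))].
    intros i; simpl; destruct (j <? i)%nat; ring.
  - intros i; rewrite <- (esym_S_sum_lt r i i), Rmult_comm, scal_sum by lia.
    apply infinite_sum_finite; intros j Hj; destruct (Nat.ltb_spec j i); [lia | ring].
Qed.

Lemma infinite_sum_esym_div_pronic r :
  infinite_sum (fun i => esym r i / (INR (S i) * INR (S (S i)))) 1.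
Proof.
  assert (Hpronic : forall i, / (INR (S i) * INR (S (S i))) = / INR (S i) - / INR (S (S i))).
  { intros i; pose proof (INR_S_pos i); rewrite (S_INR (S i)); field; lra. }
  induction r as [|r IH].
  - rewrite <- Rinv_1; change 1 with (INR 1).
    eapply infinite_sum_ext; [|exact (infinite_sum_telescope _ Un_cv_inv_S)].
    intros i; cbv beta; simpl esym; rewrite <- Hpronic; unfold Rdiv; ring.
  - apply (infinite_sum_ext (fun i => esym (S r) i * / (INR (S i) * INR (S (S i))))); [reflexivity|].
    apply (infinite_sum_esym_S_mul r _ (fun j => / INR (S (S j)))).
    + intros i; left; apply Rinv_0_lt_compat, Rmult_lt_0_compat; apply INR_S_pos.
    + intros j; eapply infinite_sum_ext; [|exact (infinite_sum_telescope_from _ j Un_cv_inv_S)].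
      intros i; cbv beta; rewrite Hpronic; reflexivity.
    + eapply infinite_sum_ext; [|exact IH]; intros j; unfold Rdiv; rewrite Rinv_mult; ring.
Qed.

Definition beta_nat (m n : nat) : R := INR (fact m) * INR (fact n) / INR (fact (m + n)).

Lemma INR_fact_pos n : 0 < INR (fact n).
Proof. apply lt_0_INR, lt_O_fact. Qed.

Lemma beta_nat_pos m n : 0 < beta_nat m n.
Proof.
  unfold beta_nat; pose proof (INR_fact_pos m); pose proof (INR_fact_pos n).
  apply Rdiv_lt_0_compat; [nra | apply INR_fact_pos].
Qed.

Lemma beta_nat_comm m n : beta_nat m n = beta_nat n m.
Proof. unfold beta_nat, Rdiv; rewrite (Nat.add_comm n m); ring. Qed.

Lemma beta_nat_0_r m : beta_nat m 0 = 1.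
Proof. unfold beta_nat; rewrite Nat.add_0_r; simpl; field; pose proof (INR_fact_pos m); lra. Qed.

Lemma beta_nat_S_r m n : beta_nat m (S n) = beta_nat m n * INR (S n) / INR (S (m + n)).
Proof.
  unfold beta_nat; rewrite Nat.add_succ_r, !fact_simpl, !mult_INR.
  pose proof (INR_fact_pos (m + n)); pose proof (INR_S_pos (m + n)); field; lra.
Qed.

Lemma beta_nat_le_inv m n : (1 <= m)%nat -> beta_nat m n <= / INR (S n).
Proof.
  intros Hm; induction Hm as [|m Hm IH].
  - unfold beta_nat; change (1 + n)%nat with (S n); change (fact 1) with 1%nat.
    rewrite (fact_simpl n), mult_INR.
    pose proof (INR_fact_pos n); pose proof (INR_S_pos n); apply Req_le; simpl (INR 1); field; lra.
  - rewrite beta_nat_comm, beta_nat_S_r, beta_nat_comm.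
    pose proof (beta_nat_pos m n); pose proof (INR_S_pos (n + m)).
    assert (INR (S m) <= INR (S (n + m))) by (apply le_INR; lia).
    apply Rle_trans with (beta_nat m n); [|exact IH].
    apply (Rmult_le_reg_r (INR (S (n + m)))); [lra|].
    unfold Rdiv; rewrite Rmult_assoc, Rinv_l by lra; nra.
Qed.

Lemma beta_nat_telescope m n : (1 <= m)%nat ->
  beta_nat m (S n) / INR (S n) = beta_nat m n / INR m - beta_nat m (S n) / INR m.
Proof.
  intros Hm; rewrite (beta_nat_S_r m n), !S_INR, plus_INR.
  assert (0 < INR m) by (apply lt_0_INR; lia); pose proof (pos_INR n); field; lra.
Qed.

Lemma Un_cv_beta_nat_div m : (1 <= m)%nat -> Un_cv (fun n => beta_nat m n / INR m) 0.
Proof.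
  intros Hm; apply Un_cv_0_le_inv; intros n.
  assert (1 <= INR m) by (apply (le_INR 1); exact Hm).
  pose proof (beta_nat_pos m n); pose proof (beta_nat_le_inv m n Hm); split.
  - apply Rdiv_le_0_compat; lra.
  - apply Rle_trans with (beta_nat m n); [|lra].
    apply (Rmult_le_reg_r (INR m)); [lra|]; unfold Rdiv; rewrite Rmult_assoc, Rinv_l; nra.
Qed.

Lemma infinite_sum_beta_nat_div m : (1 <= m)%nat ->
  infinite_sum (fun n => beta_nat m (S n) / INR (S n)) (/ INR m).
Proof.
  intros Hm; replace (/ INR m) with (beta_nat m 0 / INR m) by (rewrite beta_nat_0_r; field;
    apply not_0_INR; lia).
  eapply infinite_sum_ext; [|exact (infinite_sum_telescope _ (Un_cv_beta_nat_div m Hm))].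
  intros n; symmetry; apply beta_nat_telescope, Hm.
Qed.

Lemma infinite_sum_esym_beta_nat r m : (1 <= m)%nat ->
  infinite_sum (fun n => esym r n * (beta_nat m (S n) / INR (S n))) (/ INR m ^ S r).
Proof.
  intros Hm; assert (Hm0 : 0 < INR m) by (apply lt_0_INR; lia).
  induction r as [|r IH].
  - rewrite pow_1; eapply infinite_sum_ext; [|exact (infinite_sum_beta_nat_div m Hm)].
    intros n; simpl; ring.
  - apply (infinite_sum_esym_S_mul r _ (fun j => beta_nat m (S j) / INR m)).
    + intros i; apply Rdiv_le_0_compat; [left; apply beta_nat_pos | apply INR_S_pos].
    + intros j; eapply infinite_sum_ext;
        [|exact (infinite_sum_telescope_from _ j (Un_cv_beta_nat_div m Hm))].
      intros i; cbv beta; rewrite beta_nat_telescope; auto.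
    + replace (/ INR m ^ S (S r)) with (/ INR m * / INR m ^ S r)
        by (simpl; field; split; [apply pow_nonzero|]; lra).
      eapply infinite_sum_ext; [|exact (infinite_sum_scal _ _ _ IH)].
      intros n; cbv beta; pose proof (INR_S_pos n); field; lra.
Qed.

Lemma zeta_spec s : (2 <= s)%nat -> infinite_sum (fun n => / INR (S n) ^ s) (zeta s).
Proof.
  intros Hs; unfold zeta; apply epsilon_spec.
  destruct (Rseries_CV_comp (fun n => / INR (S n) ^ s)
    (fun n => 2 * (/ INR (S n) - / INR (S (S n))))) as [l Hl]; [|exists (2 * / INR 1)|exists l; exact Hl].
  - intros n; pose proof (INR_S_pos n); assert (1 <= INR (S n)) by (apply (le_INR 1); lia).
    split; [left; apply Rinv_0_lt_compat, pow_lt; lra|].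
    apply Rle_trans with (/ INR (S n) ^ 2).
    + apply Rinv_le_contravar; [apply pow_lt; lra | apply Rle_pow; auto].
    + rewrite (S_INR (S n)); apply (Rmult_le_reg_r (INR (S n) ^ 2 * (INR (S n) + 1))); [nra|].
      field_simplify; nra.
  - exact (infinite_sum_scal 2 _ _ (infinite_sum_telescope _ Un_cv_inv_S)).
Qed.

Lemma infinite_sum_esym_div_sq r :
  infinite_sum (fun n => esym r n / INR (S n) ^ 2) (zeta (S (S r))).
Proof.
  apply (infinite_sum_exchange
    (fun m n => / INR (S m) * (esym r n * (beta_nat (S m) (S n) / INR (S n))))
    (fun m => / INR (S m) ^ S (S r))); [| | |apply zeta_spec; lia].
  - intros m n; apply Rmult_le_pos; [left; apply Rinv_0_lt_compat, INR_S_pos|].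
    apply Rmult_le_pos; [apply esym_ge0|].
    apply Rdiv_le_0_compat; [left; apply beta_nat_pos | apply INR_S_pos].
  - intros m; replace (/ INR (S m) ^ S (S r)) with (/ INR (S m) * / INR (S m) ^ S r)
      by (rewrite <- Rinv_mult; reflexivity).
    apply infinite_sum_scal, infinite_sum_esym_beta_nat; lia.
  - intros n; replace (esym r n / INR (S n) ^ 2) with (esym r n / INR (S n) * / INR (S n))
      by (pose proof (INR_S_pos n); field; lra).
    eapply infinite_sum_ext;
      [|exact (infinite_sum_scal _ _ _ (infinite_sum_beta_nat_div (S n) ltac:(lia)))].
    intros m; cbv beta; rewrite beta_nat_comm; unfold Rdiv; ring.
Qed.

Lemma sum_f_2_S k f : sum_f 2 (S k + 2) f = sum_f 2 (k + 2) f + f (S k + 2)%nat.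
Proof.
  unfold sum_f; replace (S k + 2 - 2)%nat with (S k) by lia; replace (k + 2 - 2)%nat with k by lia.
  apply tech5.
Qed.

Lemma infinite_sum_esym_div_sq_shift k :
  infinite_sum (fun n => esym k n / INR (S (S n)) ^ 2) (sum_f 2 (k + 2) zeta - INR (k + 1)).
Proof.
  induction k as [|k IH].
  - replace (sum_f 2 (0 + 2) zeta - INR (0 + 1)) with (zeta 2 - / INR 1 ^ 2)
      by (unfold sum_f; simpl; field).
    eapply infinite_sum_ext; [|exact (infinite_sum_shift _ _ (zeta_spec 2 (le_n _)))].
    intros n; simpl esym; unfold Rdiv; ring.
  - pose proof (infinite_sum_shift _ _ (infinite_sum_esym_div_sq (S k))) as Hzeta.
    pose proof (infinite_sum_plus _ _ _ _
      (infinite_sum_minus _ _ _ _ Hzeta (infinite_sum_esym_div_pronic k)) IH) as Hsum.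
    replace (sum_f 2 (S k + 2) zeta - INR (S k + 1)) with
      (zeta (S (S (S k))) - esym (S k) 0 / INR 1 ^ 2 - 1 + (sum_f 2 (k + 2) zeta - INR (k + 1)))
      by (rewrite sum_f_2_S, !plus_INR, (S_INR k); replace (S k + 2)%nat with (S (S (S k))) by lia;
          simpl esym; unfold Rdiv; ring).
    eapply infinite_sum_ext; [|exact Hsum]; intros n; cbv beta; rewrite esym_S_S.
    pose proof (INR_S_pos n); pose proof (INR_S_pos (S n)); rewrite (S_INR (S n)); field; lra.
Qed.

(** * Newton's identities *)

Definition lsum {X} (f : X -> R) (l : list X) : R := fold_right Rplus 0 (map f l).

Lemma lsum_ext {X} (f g : X -> R) l : (forall x, f x = g x) -> lsum f l = lsum g l.
Proof. intros Hfg; unfold lsum; induction l as [|x l IH]; simpl; [|rewrite Hfg, IH]; reflexivity. Qed.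

Lemma lsum_app {X} (f : X -> R) l1 l2 : lsum f (l1 ++ l2) = lsum f l1 + lsum f l2.
Proof. unfold lsum; induction l1 as [|x l1 IH]; simpl; [|rewrite IH]; ring. Qed.

Lemma lsum_flat_map {X Y} (f : Y -> R) (g : X -> list Y) l :
  lsum f (flat_map g l) = lsum (fun x => lsum f (g x)) l.
Proof. induction l as [|x l IH]; [reflexivity|]; simpl; rewrite lsum_app, IH; reflexivity. Qed.

Lemma lsum_map {X Y} (f : Y -> R) (g : X -> Y) l : lsum f (map g l) = lsum (fun x => f (g x)) l.
Proof. unfold lsum; rewrite map_map; reflexivity. Qed.

Lemma lsum_seq (f : nat -> R) N : lsum f (seq 0 (S N)) = sum_f_R0 f N.
Proof.
  induction N as [|N IH]; [unfold lsum; simpl; ring|].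
  rewrite seq_S, lsum_app, IH; unfold lsum; simpl; ring.
Qed.

Lemma lsum_scal {X} (f : X -> R) c l : lsum (fun x => c * f x) l = c * lsum f l.
Proof. unfold lsum; induction l as [|x l IH]; simpl; [|rewrite IH]; ring. Qed.

Lemma lsum_sum_f_R0 {X} (f : X -> nat -> R) l N :
  lsum (fun x => sum_f_R0 (f x) N) l = sum_f_R0 (fun n => lsum (fun x => f x n) l) N.
Proof.
  unfold lsum; induction l as [|x l IH]; simpl.
  - symmetry; apply sum_eq_R0; reflexivity.
  - rewrite IH, <- sum_plus; reflexivity.
Qed.

Lemma lsum_filter {X} (f : X -> R) (p : X -> bool) l :
  fold_right Rplus 0 (map f (filter p l)) = lsum (fun x => if p x then f x else 0) l.
Proof. unfold lsum; induction l as [|x l IH]; simpl; [|destruct (p x); simpl; rewrite IH]; ring. Qed.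

Definition alt_sign (i : nat) : R := if Nat.even i then -1 else 1.

Lemma alt_sign_S i : alt_sign (S i) = - alt_sign i.
Proof. unfold alt_sign; rewrite Nat.even_succ, <- Nat.negb_even; destruct (Nat.even i); simpl; ring. Qed.

Definition pfactor (i a : nat) (y : nat -> R) : R :=
  (if Nat.even i then (-1) ^ a else 1) / INR (fact a) * (y i / INR i) ^ a.

Lemma pfactor_0 i y : pfactor i 0 y = 1.
Proof. unfold pfactor; destruct (Nat.even i); simpl; field. Qed.

Lemma pfactor_S i a y : (1 <= i)%nat ->
  INR (i * S a) * pfactor i (S a) y = alt_sign i * y i * pfactor i a y.
Proof.
  intros Hi; unfold pfactor, alt_sign; rewrite fact_simpl, !mult_INR.
  assert (0 < INR i) by (apply lt_0_INR; lia); pose proof (INR_S_pos a).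
  pose proof (lt_0_INR _ (lt_O_fact a)).
  destruct (Nat.even i); simpl pow; field; lra.
Qed.

Definition Ppart (i L B w : nat) (y : nat -> R) : R :=
  lsum (fun m => if (weight i m =? w)%nat then pterm i y m else 0) (tuples L B).

Lemma P_Ppart k y : P k y = Ppart 1 k k k y.
Proof. apply lsum_filter. Qed.

Lemma Ppart_0 i B w y : Ppart i 0 B w y = if (w =? 0)%nat then 1 else 0.
Proof. unfold Ppart, lsum; destruct w; simpl; ring. Qed.

Lemma Ppart_S i L B w y : Ppart i (S L) B w y =
  sum_f_R0 (fun a => if (i * a <=? w)%nat then pfactor i a y * Ppart (S i) L B (w - i * a) y else 0) B.
Proof.
  unfold Ppart; cbn [tuples]; rewrite lsum_flat_map.
  rewrite (lsum_ext _ (fun t => sum_f_R0 (fun a => (if (i * a <=? w)%nat then pfactor i a y else 0) *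
    (if (weight (S i) t =? w - i * a)%nat then pterm (S i) y t else 0)) B)).
  - rewrite lsum_sum_f_R0; apply sum_eq; intros a _; rewrite lsum_scal.
    destruct (i * a <=? w)%nat; ring.
  - intros t; rewrite lsum_map, lsum_seq; apply sum_eq; intros a _; simpl weight; simpl pterm.
    destruct (Nat.leb_spec (i * a) w), (Nat.eqb_spec (i * a + weight (S i) t) w),
      (Nat.eqb_spec (weight (S i) t) (w - i * a)); lia || (unfold pfactor; ring).
Qed.

Lemma Ppart_weight_0 L i B y : (1 <= i)%nat -> Ppart i L B 0 y = 1.
Proof.
  revert i; induction L as [|L IH]; intros i Hi; [apply Ppart_0|].
  rewrite Ppart_S, sum_f_R0_eq_first, Nat.mul_0_r; simpl; [rewrite pfactor_0, IH by lia; ring|].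
  intros a Ha; destruct (Nat.leb_spec (i * a) 0); [nia | reflexivity].
Qed.

Lemma Ppart_newton_head i L B w y : (1 <= i)%nat -> (w <= B)%nat ->
  sum_f_R0 (fun a => if (i * a <=? w)%nat
    then INR (i * a) * (pfactor i a y * Ppart (S i) L B (w - i * a) y) else 0) B =
  if (i <=? w)%nat then alt_sign i * y i * Ppart i (S L) B (w - i) y else 0.
Proof.
  intros Hi HwB; set (F := fun a => if (i * a <=? w)%nat
    then INR (i * a) * (pfactor i a y * Ppart (S i) L B (w - i * a) y) else 0).
  transitivity (sum_f_R0 F (S B)).
  { assert (HF : F (S B) = 0) by (unfold F; destruct (Nat.leb_spec (i * S B) w); [nia | ring]).
    rewrite tech5, HF; ring. }
  rewrite decomp_sum by lia; simpl pred.
  replace (F O) with 0 by (unfold F; rewrite Nat.mul_0_r; simpl; ring); rewrite Rplus_0_l.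
  destruct (Nat.leb_spec i w) as [Hiw|Hiw].
  - rewrite Ppart_S, scal_sum; apply sum_eq; intros a _; unfold F.
    destruct (Nat.leb_spec (i * S a) w), (Nat.leb_spec (i * a) (w - i)); try nia; [|ring].
    rewrite <- Rmult_assoc, pfactor_S by lia.
    replace (w - i * S a)%nat with (w - i - i * a)%nat by nia; ring.
  - apply sum_eq_R0; intros a _; unfold F; destruct (Nat.leb_spec (i * S a) w); [nia | reflexivity].
Qed.

Lemma Ppart_newton_tail i L B w y :
  (forall v, (v <= w)%nat -> INR v * Ppart (S i) L B v y = sum_f_R0 (fun j =>
     if (S i <=? j)%nat then alt_sign j * y j * Ppart (S i) L B (v - j) y else 0) v) ->
  sum_f_R0 (fun a => if (i * a <=? w)%nat
    then pfactor i a y * (INR (w - i * a) * Ppart (S i) L B (w - i * a) y) else 0) B =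
  sum_f_R0 (fun j => if (S i <=? j)%nat then alt_sign j * y j * Ppart i (S L) B (w - j) y else 0) w.
Proof.
  intros IH.
  transitivity (sum_f_R0 (fun a => sum_f_R0 (fun j =>
    if (S i <=? j)%nat then if (i * a + j <=? w)%nat
      then alt_sign j * y j * (pfactor i a y * Ppart (S i) L B (w - j - i * a) y) else 0 else 0) w) B).
  - apply sum_eq; intros a _; destruct (Nat.leb_spec (i * a) w).
    + rewrite IH, scal_sum, (sum_f_R0_guard_le_extend _ (w - i * a) w) by lia.
      apply sum_eq; intros j _.
      destruct (Nat.leb_spec j (w - i * a)), (Nat.leb_spec (S i) j), (Nat.leb_spec (i * a + j) w);
        try lia; try ring.
      replace (w - i * a - j)%nat with (w - j - i * a)%nat by lia; ring.
    + symmetry; apply sum_eq_R0; intros j _.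
      destruct (S i <=? j)%nat; [destruct (Nat.leb_spec (i * a + j) w); [lia|]|]; reflexivity.
  - rewrite sum_f_R0_exchange; apply sum_eq; intros j Hj; destruct (S i <=? j)%nat.
    + rewrite Ppart_S, scal_sum; apply sum_eq; intros a _.
      destruct (Nat.leb_spec (i * a + j) w), (Nat.leb_spec (i * a) (w - j)); lia || ring.
    + apply sum_eq_R0; reflexivity.
Qed.

(* Newton's identity [w * e_w = sum_(j=1..w) (-1)^(j-1) p_j e_(w-j)] for the truncated sums,
   where [y j] plays the role of the power sum [p_j]. *)
Lemma Ppart_newton L : forall i B w y, (1 <= i)%nat -> (w <= B)%nat -> (w < i + L)%nat ->
  INR w * Ppart i L B w y =
  sum_f_R0 (fun j => if (i <=? j)%nat then alt_sign j * y j * Ppart i L B (w - j) y else 0) w.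
Proof.
  induction L as [|L IH]; intros i B w y Hi HwB HwL.
  - rewrite sum_eq_R0, Ppart_0; [destruct w; simpl; ring|].
    intros j Hj; destruct (Nat.leb_spec i j); [lia | reflexivity].
  - rewrite sum_f_R0_guard_le_split, <- Ppart_newton_head, <- Ppart_newton_tail by
      (auto || (intros v Hv; apply IH; lia)).
    rewrite Ppart_S, scal_sum, <- sum_plus; apply sum_eq; intros a _.
    destruct (Nat.leb_spec (i * a) w); [rewrite minus_INR by lia; ring | ring].
Qed.

Lemma esym_sub_S k j n : esym (k - j) (S n) =
  esym (k - j) n + (if (j <? k)%nat then esym (k - S j) n / INR (S n) else 0).
Proof.
  destruct (Nat.ltb_spec j k).
  - replace (k - j)%nat with (S (k - S j)) by lia; apply esym_S_S.
  - replace (k - j)%nat with O by lia; simpl; ring.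
Qed.

(* Induction on the number of variables: adjoining [x = 1/(n+1)] changes each power sum
   [Hr (S j)] by [x ^ S j], and these increments telescope to [x * esym k n] ([Hnew]). *)
Lemma esym_newton n k : INR (S k) * esym (S k) n =
  sum_f_R0 (fun j => alt_sign (S j) * Hr (S j) n * esym (k - j) n) k.
Proof.
  revert k; induction n as [|n IH]; intros k.
  - rewrite sum_eq_R0; [simpl; ring | intros j _; simpl; ring].
  - set (x := / INR (S n)).
    assert (Hold : sum_f_R0 (fun j => alt_sign (S j) * Hr (S j) n * esym (k - j) (S n)) k =
                   INR (S k) * esym (S k) n + x * (INR k * esym k n)).
    { rewrite (sum_eq _ (fun j => alt_sign (S j) * Hr (S j) n * esym (k - j) n +
        (if (j <? k)%nat then alt_sign (S j) * Hr (S j) n * esym (k - S j) n * x else 0)))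
        by (intros j _; rewrite esym_sub_S; destruct (j <? k)%nat; unfold x, Rdiv; ring).
      rewrite sum_plus, <- IH; f_equal; destruct k as [|k]; [simpl; ring|].
      rewrite tech5, Nat.ltb_irrefl, Rplus_0_r, IH, scal_sum; apply sum_eq; intros j Hj.
      destruct (Nat.ltb_spec j (S k)); [|lia]; replace (S k - S j)%nat with (k - j)%nat by lia; ring. }
    assert (Hnew : sum_f_R0 (fun j => alt_sign (S j) * x ^ S j * esym (k - j) (S n)) k =
                   x * esym k n).
    { rewrite (sum_eq _ (fun j => if (j <? k)%nat
        then alt_sign (S j) * x ^ S j * esym (k - j) n
             - alt_sign (S (S j)) * x ^ S (S j) * esym (k - S j) n
        else alt_sign (S j) * x ^ S j * esym (k - j) n)).
      - rewrite (sum_f_R0_telescope_until (fun j => alt_sign (S j) * x ^ S j * esym (k - j) n)).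
        rewrite Nat.sub_0_r; unfold alt_sign; simpl; ring.
      - intros j _; rewrite esym_sub_S, (alt_sign_S (S j)).
        destruct (j <? k)%nat; simpl pow; unfold x, Rdiv; ring. }
    rewrite esym_S_S, (sum_eq _ (fun j => alt_sign (S j) * Hr (S j) n * esym (k - j) (S n) +
      alt_sign (S j) * x ^ S j * esym (k - j) (S n))).
    2:{ intros j _; change (Hr (S j) (S n)) with (Hr (S j) n + / INR (S n) ^ S j).
        unfold x; rewrite pow_inv; ring. }
    rewrite sum_plus, Hold, Hnew, S_INR; unfold x, Rdiv; ring.
Qed.

Lemma Ppart_harmonic_esym k n w : (w <= k)%nat -> Ppart 1 k k w (fun i => Hr i n) = esym w n.
Proof.
  induction w as [w IH] using lt_wf_ind; intros Hwk; destruct w as [|w].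
  - apply Ppart_weight_0; lia.
  - apply (Rmult_eq_reg_l (INR (S w))); [|apply not_0_INR; lia].
    rewrite Ppart_newton, esym_newton, decomp_sum by lia; simpl pred; simpl (1 <=? 0)%nat.
    rewrite Rplus_0_l; apply sum_eq; intros j Hj; simpl (1 <=? S j)%nat; rewrite IH by lia; reflexivity.
Qed.

Lemma P_harmonic_esym k n : P k (fun i => Hr i n) = esym k n.
Proof. rewrite P_Ppart; apply Ppart_harmonic_esym, le_n. Qed.

Theorem mainTheorem20 (k : nat) (hk : (1 <= k)%nat) :
  infinite_sum
    (fun n => P k (fun i => Hr i (S n)) / (INR (S n) + 2) ^ 2)
    (sum_f 2 (k + 2) zeta - INR (k + 1)).
Proof.
  replace (sum_f 2 (k + 2) zeta - INR (k + 1))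
    with (sum_f 2 (k + 2) zeta - INR (k + 1) - esym k 0 / INR 2 ^ 2)
    by (destruct k as [|k]; [lia | simpl esym; unfold Rdiv; ring]).
  eapply infinite_sum_ext; [|exact (infinite_sum_shift _ _ (infinite_sum_esym_div_sq_shift k))].
  intros n; cbv beta; rewrite P_harmonic_esym.
  replace (INR (S n) + 2) with (INR (S (S (S n)))) by (rewrite !S_INR; ring); reflexivity.
Qed.
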